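(* For every Tychonoff space $X$, the following are equivalent: (1) $C_p(X)\models U_{fin}(\Gamma_f,\Omega_f)$ for every $f\in C_p(X)$; (2) $X\models U_{fin}(\Gamma_F,\Omega)$.
   Context: All spaces are Tychonoff; $C_p(X)$ is $C(X)$ with pointwise convergence topology; basic neighbourhoods are $\langle f,K,\varepsilon\rangle=\{g\in C(X):|g(x)-f(x)|<\varepsilon\ \forall x\in K\}$, $K\subseteq X$ finite, $\varepsilon>0$. For $f\in C_p(X)$, $\Gamma_f$ is the family of infinite $A\subseteq C(X)$ with $f\notin A$ such that every neighbourhood of $f$ contains all but finitely many elements of $A$. $C_p(X)\models U_{fin}(\Gamma_f,\Omega_f)$ means: for every sequence $(S_n)_{n\in\omega}$ of elements of $\Gamma_f$ there are finite $\mathcal F_n\subseteq S_n$ such that for every finite $K=\{x_1,\dots,x_k\}\subseteq X$ and $\varepsilon>0$ there is $n$ such that for each $j\le k$ some $g\in\mathcal F_n$ satisfies $|g(x_j)-f(x_j)|<\varepsilon$. Zero-set: $g^{-1}(0)$, $g\in C(X)$; cozero-set: its complement. A cover $\mathcal U$ of $X$ always means $X=\bigcup\mathcal U$, $X\notin\mathcal U$; $\gamma$-cover: infinite, each point in all but finitely many members. $\Gamma_F$: $\gamma$-covers $\mathcal U$ of $X$ by cozero-sets for which there are zero-sets $F(U)\subseteq U$ ($U\in\mathcal U$) with $\{F(U):U\in\mathcal U\}$ a $\gamma$-cover of $X$. $X\models U_{fin}(\Gamma_F,\Omega)$ means: whenever $\mathcal U_n\in\Gamma_F$ ($n\in\omega$)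 and no $\mathcal U_n$ contains a finite subcover, there are finite $\mathcal F_n\subseteq\mathcal U_n$ such that every finite subset of $X$ is contained in $\bigcup\mathcal F_n$ for some $n$ (i.e. $\{\bigcup\mathcal F_n:n\in\omega\}$ is an $\omega$-cover). *)

From Stdlib Require Import Reals List Rtopology.
Open Scope R_scope.

Record TopSpace := {
  carrier :> Type;
  is_open : (carrier -> Prop) -> Prop;
  open_full : is_open (fun _ => True);
  open_inter : forall U V, is_open U -> is_open V -> is_open (fun x => U x /\ V x);
  open_union : forall (F : (carrier -> Prop) -> Prop),
      (forall U, F U -> is_open U) -> is_open (fun x => exists U, F U /\ U x)
}.

Definition is_closed (X : TopSpace) (C : X -> Prop) : Prop :=
  is_open X (fun x => ~ C x).

Definition continuous_map (X : TopSpace) (f : X -> R) : Prop :=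
  forall V : R -> Prop, open_set V -> is_open X (fun x => V (f x)).

Definition T1 (X : TopSpace) : Prop :=
  forall x : X, is_closed X (fun y => y = x).

Definition completely_regular (X : TopSpace) : Prop :=
  forall (C : X -> Prop) (x : X), is_closed X C -> ~ C x ->
    exists f : X -> R, continuous_map X f /\ f x = 0 /\ forall y, C y -> f y = 1.

Definition Tychonoff (X : TopSpace) : Prop := T1 X /\ completely_regular X.

Definition finite_set {A : Type} (S : A -> Prop) : Prop :=
  exists l : list A, forall a, S a -> In a l.

Definition infinite_set {A : Type} (S : A -> Prop) : Prop := ~ finite_set S.

Definition basic_nbhd (X : TopSpace) (f : X -> R) (K : list X) (eps : R)
  (g : X -> R) : Prop :=
  forall x, In x K -> Rabs (g x - f x) < eps.

Definition Gamma_f (X : TopSpace) (f : X -> R) (A : (X -> R) -> Prop) : Prop :=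
  (forall g, A g -> continuous_map X g) /\
  infinite_set A /\ ~ A f /\
  forall (K : list X) (eps : R), 0 < eps ->
    finite_set (fun g => A g /\ ~ basic_nbhd X f K eps g).

Definition Cp_Ufin_Gamma_Omega (X : TopSpace) (f : X -> R) : Prop :=
  forall S : nat -> ((X -> R) -> Prop),
    (forall n, Gamma_f X f (S n)) ->
    exists F : nat -> list (X -> R),
      (forall n g, In g (F n) -> S n g) /\
      forall (K : list X) (eps : R), 0 < eps ->
        exists n, forall x, In x K ->
          exists g, In g (F n) /\ Rabs (g x - f x) < eps.

Definition zero_set (X : TopSpace) (Z : X -> Prop) : Prop :=
  exists g : X -> R, continuous_map X g /\ forall x, Z x <-> g x = 0.

Definition cozero_set (X : TopSpace) (U : X -> Prop) : Prop :=
  exists g : X -> R, continuous_map X g /\ forall x, U x <-> g x <> 0.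

Definition is_cover (X : TopSpace) (C : (X -> Prop) -> Prop) : Prop :=
  (forall x, exists U, C U /\ U x) /\
  (forall U, C U -> exists x, ~ U x).

Definition gamma_cover (X : TopSpace) (C : (X -> Prop) -> Prop) : Prop :=
  is_cover X C /\ infinite_set C /\
  forall x : X, finite_set (fun U => C U /\ ~ U x).

Definition Gamma_F (X : TopSpace) (C : (X -> Prop) -> Prop) : Prop :=
  gamma_cover X C /\ (forall U, C U -> cozero_set X U) /\
  exists F : (X -> Prop) -> (X -> Prop),
    (forall U, C U -> zero_set X (F U) /\ forall x, F U x -> U x) /\
    gamma_cover X (fun Z => exists U, C U /\ Z = F U).

Definition has_finite_subcover (X : TopSpace) (C : (X -> Prop) -> Prop) : Prop :=
  exists l : list (X -> Prop),
    (forall U, In U l -> C U) /\ forall x : X, exists U, In U l /\ U x.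

Definition X_Ufin_GammaF_Omega (X : TopSpace) : Prop :=
  forall C : nat -> ((X -> Prop) -> Prop),
    (forall n, Gamma_F X (C n)) ->
    (forall n, ~ has_finite_subcover X (C n)) ->
    exists F : nat -> list (X -> Prop),
      (forall n U, In U (F n) -> C n U) /\
      forall K : list X, exists n, forall x, In x K ->
        exists U, In U (F n) /\ U x.

From Stdlib Require Import Reals List Rtopology.
From Stdlib Require Import Lra Lia.
From Stdlib Require Import Classical FunctionalExtensionality PropExtensionality ClassicalEpsilon.
Open Scope R_scope.

(* (1) => (2): for U in a Gamma_F-cover with zero set F(U) inside U, pick a continuous
   h_U that vanishes on F(U) and equals 1 off U.  Since {F(U)} is a gamma-cover these
   functions converge to 0 in C_p(X), and a selection that is 1-close to 0 at the points
   of a finite K yields sets U containing those points.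
   (2) => (1): for S_n converging to f, the sets {|g - f| < 1/(n+1)} (g in S_n) form
   Gamma_F-covers, with zero sets {|g - f| <= 1/(2(n+1))}.  If infinitely many of them
   have finite subcovers, those already give the selection.  Otherwise (2) applies to a
   tail; no selected family covers X, so every finite set is covered at arbitrarily late
   stages, where the radii are arbitrarily small. *)

Section Continuity.

Variable X : TopSpace.

Lemma open_of_locally_open (P : X -> Prop) :
  (forall x, P x -> exists O, is_open X O /\ O x /\ forall y, O y -> P y) ->
  is_open X P.
Proof.
  intros H.
  assert (E : (fun x => exists U, (is_open X U /\ forall y, U y -> P y) /\ U x) = P).
  { apply functional_extensionality; intro x; apply propositional_extensionality; split.
    - intros [U [[_ HU] Ux]]; auto.
    - intros Px; destruct (H x Px) as [O [HO [Ox HO']]]; exists O; auto. }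
  rewrite <- E. apply open_union. intros U [HU _]; exact HU.
Qed.

Lemma continuous_map_ball (a : X -> R) (c : R) (d : posreal) :
  continuous_map X a -> is_open X (fun y => Rabs (a y - c) < d).
Proof. intros Ha. apply (Ha (disc c d)), disc_P1. Qed.

Lemma continuous_map_comp_pt (a : X -> R) (phi : R -> R) :
  continuous_map X a -> (forall x, continuity_pt phi (a x)) ->
  continuous_map X (fun x => phi (a x)).
Proof.
  intros Ha Hphi V HV. apply open_of_locally_open. intros x Vx.
  destruct (HV _ Vx) as [e He].
  destruct (Hphi x e (cond_pos e)) as [alp [Halp Hd]].
  exists (fun y => Rabs (a y - a x) < mkposreal alp Halp).
  split; [apply continuous_map_ball; exact Ha|].
  split; [simpl; rewrite Rminus_diag, Rabs_R0; exact Halp|].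
  intros y Hy. apply He. unfold disc.
  destruct (Req_dec (a y) (a x)) as [E|E].
  - rewrite E, Rminus_diag, Rabs_R0. apply cond_pos.
  - apply (Hd (a y)). split; [split; [exact I|auto]|exact Hy].
Qed.

Lemma continuous_map_comp (a : X -> R) (phi : R -> R) :
  continuous_map X a -> continuity phi -> continuous_map X (fun x => phi (a x)).
Proof. intros Ha Hphi. apply continuous_map_comp_pt; auto. Qed.

Lemma continuous_map_const (c : R) : continuous_map X (fun _ => c).
Proof.
  intros V HV. apply open_of_locally_open. intros x Vx.
  exists (fun _ => True). split; [apply open_full|auto].
Qed.

Lemma continuous_map_plus (a b : X -> R) :
  continuous_map X a -> continuous_map X b -> continuous_map X (fun x => a x + b x).
Proof.
  intros Ha Hb V HV. apply open_of_locally_open. intros x Vx.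
  destruct (HV _ Vx) as [e He].
  assert (He2 : 0 < e / 2) by (generalize (cond_pos e); lra).
  exists (fun y => Rabs (a y - a x) < mkposreal _ He2 /\ Rabs (b y - b x) < mkposreal _ He2).
  split; [apply open_inter; apply continuous_map_ball; auto|].
  split; [simpl; rewrite !Rminus_diag, Rabs_R0; auto|].
  intros y [Hay Hby]. apply He. unfold disc. simpl in *.
  replace (a y + b y - (a x + b x)) with ((a y - a x) + (b y - b x)) by ring.
  eapply Rle_lt_trans; [apply Rabs_triang|]. lra.
Qed.

Lemma continuous_map_minus (a b : X -> R) :
  continuous_map X a -> continuous_map X b -> continuous_map X (fun x => a x - b x).
Proof.
  intros Ha Hb. apply (continuous_map_plus a (fun x => - b x)); auto.
  apply (continuous_map_comp b Ropp Hb), continuity_opp, derivable_continuous, derivable_id.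
Qed.

Lemma continuous_map_abs (a : X -> R) :
  continuous_map X a -> continuous_map X (fun x => Rabs (a x)).
Proof. intros Ha. apply (continuous_map_comp a Rabs Ha), Rcontinuity_abs. Qed.

Lemma continuous_map_mult (a b : X -> R) :
  continuous_map X a -> continuous_map X b -> continuous_map X (fun x => a x * b x).
Proof.
  intros Ha Hb.
  assert (Hsq : forall c, continuous_map X c -> continuous_map X (fun x => c x * c x)).
  { intros c Hc. apply (continuous_map_comp c (fun t => t * t) Hc).
    apply continuity_mult; apply derivable_continuous, derivable_id. }
  assert (E : (fun x => a x * b x) =
              (fun x => / 4 * ((a x + b x) * (a x + b x) - (a x - b x) * (a x - b x)))).
  { apply functional_extensionality; intro; field. }
  rewrite E. apply (continuous_map_comp _ (fun t => / 4 * t)).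
  - apply continuous_map_minus; apply Hsq;
      [apply continuous_map_plus|apply continuous_map_minus]; auto.
  - apply continuity_scal, derivable_continuous, derivable_id.
Qed.

Lemma continuous_map_inv (a : X -> R) :
  continuous_map X a -> (forall x, a x <> 0) -> continuous_map X (fun x => / a x).
Proof.
  intros Ha Hnz. apply (continuous_map_comp_pt a Rinv Ha). intros x.
  apply (continuity_pt_inv (fun t => t)); [apply derivable_continuous_pt, derivable_pt_id|auto].
Qed.

Lemma cozero_set_lt (a : X -> R) (r : R) :
  continuous_map X a -> cozero_set X (fun x => a x < r).
Proof.
  intros Ha. exists (fun x => (r - a x) + Rabs (r - a x)). split.
  - apply continuous_map_plus; [|apply continuous_map_abs];
      apply continuous_map_minus; auto using continuous_map_const.
  - intro x. unfold Rabs; destruct (Rcase_abs (r - a x)); split; intros; lra.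
Qed.

Lemma zero_set_le (a : X -> R) (r : R) :
  continuous_map X a -> zero_set X (fun x => a x <= r).
Proof.
  intros Ha. exists (fun x => (a x - r) + Rabs (a x - r)). split.
  - apply continuous_map_plus; [|apply continuous_map_abs];
      apply continuous_map_minus; auto using continuous_map_const.
  - intro x. unfold Rabs; destruct (Rcase_abs (a x - r)); split; intros; lra.
Qed.

Lemma zero_set_cozero_set_separation (U Z : X -> Prop) :
  cozero_set X U -> zero_set X Z -> (forall x, Z x -> U x) ->
  exists h, continuous_map X h /\ (forall x, Z x -> h x = 0) /\ (forall x, ~ U x -> h x = 1).
Proof.
  intros [g [Hg HgU]] [k [Hk HkZ]] HZU.
  assert (Hden : forall x, k x * k x + g x * g x <> 0).
  { intros x E. assert (k x = 0 /\ g x = 0) as [Ek Eg] by nra.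
    apply (proj1 (HgU x)); auto. apply HZU, HkZ; auto. }
  exists (fun x => k x * k x * / (k x * k x + g x * g x)). split; [|split].
  - apply continuous_map_mult; [apply continuous_map_mult; auto|].
    apply continuous_map_inv; auto.
    apply continuous_map_plus; apply continuous_map_mult; auto.
  - intros x Zx. rewrite (proj1 (HkZ x) Zx). ring.
  - intros x nU. assert (Eg : g x = 0) by (apply NNPP; intro N; apply nU, HgU; auto).
    rewrite Eg. field. intro Ek. apply nU, HZU, HkZ. nra.
Qed.

End Continuity.

Lemma finite_set_list {A : Type} (P : A -> Prop) :
  finite_set P -> exists l, (forall a, In a l -> P a) /\ (forall a, P a -> In a l).
Proof.
  intros [l Hl].
  assert (G : exists l0, (forall a, In a l0 -> P a) /\ (forall a, P a -> In a l -> In a l0)).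
  { clear Hl. induction l as [|b l [l0 [H1 H2]]].
    - exists nil; simpl; tauto.
    - destruct (classic (P b)) as [Pb|nPb].
      + exists (b :: l0); simpl; split.
        * intros a [<-|Ha]; auto.
        * intros a Pa [<-|Ha]; auto.
      + exists l0; split; auto. intros a Pa [<-|Ha]; [tauto|auto]. }
  destruct G as [l0 [H1 H2]]; exists l0; split; auto.
Qed.

Lemma finite_set_sub {A : Type} (P Q : A -> Prop) :
  (forall a, P a -> Q a) -> finite_set Q -> finite_set P.
Proof. intros H [l Hl]; exists l; auto. Qed.

Lemma finite_set_or {A : Type} (P Q : A -> Prop) :
  finite_set P -> finite_set Q -> finite_set (fun a => P a \/ Q a).
Proof.
  intros [l1 H1] [l2 H2]; exists (l1 ++ l2); intros a [Ha|Ha]; apply in_or_app; auto.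
Qed.

Lemma finite_set_image {A B : Type} (P : A -> Prop) (phi : B -> A) (l : list B) :
  (forall a, P a -> exists b, In b l /\ a = phi b) -> finite_set P.
Proof.
  intros H; exists (map phi l); intros a Pa.
  destruct (H a Pa) as [b [Hb ->]]; apply in_map; auto.
Qed.

Lemma infinite_set_diff {A : Type} (P Q : A -> Prop) :
  infinite_set P -> finite_set Q -> exists a, P a /\ ~ Q a.
Proof.
  intros HP HQ. apply NNPP; intro N. apply HP. apply (finite_set_sub P Q); auto.
  intros a Pa. apply NNPP; intro nQ. apply N; eauto.
Qed.

Lemma list_choice {A B : Type} (l : list A) (P : A -> B -> Prop) :
  (forall a, In a l -> exists b, P a b) ->
  exists lb, (forall b, In b lb -> exists a, In a l /\ P a b) /\
             (forall a, In a l -> exists b, In b lb /\ P a b).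
Proof.
  induction l as [|a l IH]; intros H.
  - exists nil; simpl; split; intros; tauto.
  - destruct (H a (or_introl eq_refl)) as [b Hb].
    destruct IH as [lb [H1 H2]]; [intros; apply H; simpl; auto|].
    exists (b :: lb); split.
    + intros b' [<-|Hb']; [exists a; simpl; auto|].
      destruct (H1 b' Hb') as [a' [? ?]]; exists a'; simpl; auto.
    + intros a' [<-|Ha']; [exists b; simpl; auto|].
      destruct (H2 a' Ha') as [b' [? ?]]; exists b'; simpl; auto.
Qed.

Lemma seq_list_choice {A B : Type} (l : nat -> list A) (P : nat -> A -> B -> Prop) :
  (forall n a, In a (l n) -> exists b, P n a b) ->
  exists lb : nat -> list B, forall n,
    (forall b, In b (lb n) -> exists a, In a (l n) /\ P n a b) /\
    (forall a, In a (l n) -> exists b, In b (lb n) /\ P n a b).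
Proof.
  intros H. apply (choice (fun n lb =>
    (forall b, In b lb -> exists a, In a (l n) /\ P n a b) /\
    (forall a, In a (l n) -> exists b, In b lb /\ P n a b))).
  intro n. apply list_choice, H.
Qed.

Lemma gamma_cover_intro (X : TopSpace) (C : (X -> Prop) -> Prop) :
  (forall x, exists U, C U /\ U x) ->
  (forall x, finite_set (fun U => C U /\ ~ U x)) ->
  ~ has_finite_subcover X C -> gamma_cover X C.
Proof.
  intros Hcov Hfin Hnsub. split; [split|split]; auto.
  - intros U CU. apply NNPP; intro Hall. apply Hnsub. exists (U :: nil). split.
    + intros V [<-|[]]; auto.
    + intro x. exists U. split; [simpl; auto|]. apply NNPP; intro Ux. apply Hall; eauto.
  - intros Hfinite. destruct (finite_set_list _ Hfinite) as [l [Hl1 Hl2]]. apply Hnsub.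
    exists l. split; auto. intro x. destruct (Hcov x) as [U [CU Ux]]. eauto.
Qed.

Lemma gamma_cover_shrink (X : TopSpace) (C : (X -> Prop) -> Prop) (F : (X -> Prop) -> X -> Prop) :
  gamma_cover X C -> ~ has_finite_subcover X C ->
  (forall U x, C U -> F U x -> U x) ->
  (forall x, finite_set (fun U => C U /\ ~ F U x)) ->
  gamma_cover X (fun Z => exists U, C U /\ Z = F U).
Proof.
  intros [_ [Hinf _]] Hnsub HFU Hfin. apply gamma_cover_intro.
  - intro x. destruct (infinite_set_diff _ _ Hinf (Hfin x)) as [U [CU HU]].
    exists (F U). split; eauto. apply NNPP; intro N; apply HU; auto.
  - intro x. destruct (Hfin x) as [l Hl]. apply (finite_set_image _ F l).
    intros Z [[U [CU ->]] HZ]. exists U. split; [apply Hl; auto|reflexivity].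
  - intros [lz [Hlz Hcovz]]. apply Hnsub.
    destruct (list_choice lz (fun Z U => C U /\ Z = F U)) as [lu [Hu1 Hu2]]; [exact Hlz|].
    exists lu. split.
    + intros U HU. destruct (Hu1 U HU) as [Z [_ [CU _]]]; exact CU.
    + intro x. destruct (Hcovz x) as [Z [HZ Zx]].
      destruct (Hu2 Z HZ) as [U [HU [CU ->]]]. exists U. split; [exact HU|apply HFU; auto].
Qed.

Lemma not_covering_of_no_finite_subcover (X : TopSpace) (C : (X -> Prop) -> Prop)
    (l : list (X -> Prop)) :
  ~ has_finite_subcover X C -> (forall U, In U l -> C U) ->
  exists x, forall U, In U l -> ~ U x.
Proof.
  intros Hnsub Hl. apply NNPP; intro N. apply Hnsub. exists l. split; auto.
  intro x. apply NNPP; intro Nx. apply N. exists x. intros U HU Ux. apply Nx; eauto.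
Qed.

(* Adding to K points missed by the first j families forces the covering stage to be >= j. *)
Lemma late_cover (X : TopSpace) (Fu : nat -> list (X -> Prop)) :
  (forall n, exists x, forall U, In U (Fu n) -> ~ U x) ->
  (forall K : list X, exists n, forall x, In x K -> exists U, In U (Fu n) /\ U x) ->
  forall (K : list X) (j : nat), exists n, (j <= n)%nat /\
    forall x, In x K -> exists U, In U (Fu n) /\ U x.
Proof.
  intros Hmiss Hom K j.
  assert (Hwit : exists L : list X, forall i, (i < j)%nat ->
            exists x, In x L /\ forall U, In U (Fu i) -> ~ U x).
  { induction j as [|j [L HL]].
    - exists nil; intros; lia.
    - destruct (Hmiss j) as [y Hy]. exists (y :: L). intros i Hi.
      destruct (Nat.eq_dec i j) as [->|Hne].
      + exists y; simpl; auto.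
      + destruct (HL i ltac:(lia)) as [x [Hx Hxi]]. exists x; simpl; auto. }
  destruct Hwit as [L HL]. destruct (Hom (K ++ L)) as [n Hn]. exists n. split.
  - destruct (Nat.le_gt_cases j n) as [|Hlt]; auto. destruct (HL n Hlt) as [x [Hx Hxn]].
    destruct (Hn x (in_or_app _ _ _ (or_intror Hx))) as [U [HU Ux]].
    exfalso; exact (Hxn U HU Ux).
  - intros x Hx. apply Hn, in_or_app; auto.
Qed.

Lemma Gamma_f_pointwise (X : TopSpace) (f : X -> R) (S : (X -> R) -> Prop) (x : X) (eps : R) :
  Gamma_f X f S -> 0 < eps -> finite_set (fun g => S g /\ ~ Rabs (g x - f x) < eps).
Proof.
  intros [_ [_ [_ Hconv]]] Heps.
  refine (finite_set_sub _ _ _ (Hconv (x :: nil) eps Heps)).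
  intros g [Sg Hg]. split; auto. intro Hb. apply Hg, Hb. simpl; auto.
Qed.

Lemma finite_not_basic_nbhd (X : TopSpace) (f : X -> R) (A : (X -> R) -> Prop)
    (K : list X) (eps : R) :
  (forall x, In x K -> finite_set (fun g => A g /\ ~ Rabs (g x - f x) < eps)) ->
  finite_set (fun g => A g /\ ~ basic_nbhd X f K eps g).
Proof.
  induction K as [|y K IH]; intros HK.
  - exists nil. intros g [_ Hg]. apply Hg. intros x [].
  - apply (finite_set_sub _ (fun g => (A g /\ ~ Rabs (g y - f y) < eps) \/
                                      (A g /\ ~ basic_nbhd X f K eps g))).
    + intros g [Ag Hg]. destruct (classic (Rabs (g y - f y) < eps)) as [Hy|Hy];
        [right|left]; split; auto.
      intro HgK. apply Hg. intros x [<-|Hx]; auto.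
    + apply finite_set_or; [apply HK; simpl; auto|].
      apply IH. intros x Hx. apply HK; simpl; auto.
Qed.

Lemma Gamma_F_separating_functions (X : TopSpace) (C : (X -> Prop) -> Prop) :
  Gamma_F X C -> ~ has_finite_subcover X C ->
  exists S : (X -> R) -> Prop, Gamma_f X (fun _ => 0) S /\
    forall h, S h -> exists U, C U /\ forall x, Rabs (h x) < 1 -> U x.
Proof.
  intros [[[_ Hproper] _] [Hcoz [F [HF [_ [HinfZ HpwZ]]]]]] Hnsub.
  set (Zs := fun Z => exists U, C U /\ Z = F U).
  (* The functions are indexed by the zero sets F(U), not by U: a point lies outside
     only finitely many of the F(U), but infinitely many U may share one F(U). *)
  destruct (choice (fun Z h => Zs Z -> exists U, C U /\ Z = F U /\ continuous_map X h /\
      (forall x, Z x -> h x = 0) /\ (forall x, ~ U x -> h x = 1))) as [H HH].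
  { intro Z. destruct (classic (Zs Z)) as [[U [CU ->]]|N].
    - destruct (HF U CU) as [HZ HZU].
      destruct (zero_set_cozero_set_separation X U (F U) (Hcoz U CU) HZ HZU) as [h Hh].
      exists h. intros _. exists U. tauto.
    - exists (fun _ => 0). tauto. }
  set (S := fun h => exists Z, Zs Z /\ h = H Z).
  assert (Hsep : forall h, S h -> exists U, C U /\ forall x, Rabs (h x) < 1 -> U x).
  { intros h [Z [HZ ->]]. destruct (HH Z HZ) as [U [CU [_ [_ [_ H1]]]]].
    exists U. split; auto. intros x Hx.
    apply NNPP; intro nU. rewrite (H1 x nU), Rabs_R1 in Hx. lra. }
  exists S. split; auto. split; [|split; [|split]].
  - intros h [Z [HZ ->]]. destruct (HH Z HZ) as [U [_ [_ [Hc _]]]]; exact Hc.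
  - intro Hfin. destruct (finite_set_list _ Hfin) as [lh [Hl1 Hl2]]. apply Hnsub.
    destruct (list_choice lh (fun h U => C U /\ forall x, Rabs (h x) < 1 -> U x))
      as [lu [Hu1 Hu2]]; [intros h Hh; apply Hsep, Hl1, Hh|].
    exists lu. split.
    + intros U HU. destruct (Hu1 U HU) as [h [_ [CU _]]]; exact CU.
    + intro x. destruct (infinite_set_diff _ _ HinfZ (HpwZ x)) as [Z [HZ HZx]].
      assert (Zx : Z x) by (apply NNPP; intro; apply HZx; auto).
      destruct (HH Z HZ) as [U [_ [_ [_ [H0 _]]]]].
      destruct (Hu2 (H Z) (Hl2 _ (ex_intro _ Z (conj HZ eq_refl)))) as [U' [HU' [_ HU'x]]].
      exists U'. split; auto. apply HU'x. rewrite (H0 x Zx), Rabs_R0. lra.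
  - intros [Z [HZ E]]. destruct (HH Z HZ) as [U [CU [_ [_ [_ H1]]]]].
    destruct (Hproper U CU) as [x nU]. generalize (H1 x nU). rewrite <- E. lra.
  - intros K eps Heps. apply finite_not_basic_nbhd. intros y _.
    destruct (HpwZ y) as [lz Hlz]. apply (finite_set_image _ H lz).
    intros h [[Z [HZ ->]] Hh]. exists Z. split; auto. apply Hlz. split; auto.
    intro Zy. apply Hh. destruct (HH Z HZ) as [U [_ [_ [_ [H0 _]]]]].
    rewrite (H0 y Zy), Rminus_0_r, Rabs_R0. exact Heps.
Qed.

Lemma Ufin_GammaF_Omega_of_Cp (X : TopSpace) :
  (forall f : X -> R, continuous_map X f -> Cp_Ufin_Gamma_Omega X f) ->
  X_Ufin_GammaF_Omega X.
Proof.
  intros HCp C HC Hnsub.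
  destruct (choice (fun n S => Gamma_f X (fun _ => 0) S /\
      forall h, S h -> exists U, C n U /\ forall x, Rabs (h x) < 1 -> U x)) as [S HS].
  { intro n. apply Gamma_F_separating_functions; auto. }
  destruct (HCp _ (continuous_map_const X 0) S (fun n => proj1 (HS n))) as [Fh [HFh Happrox]].
  destruct (seq_list_choice Fh (fun n h U => C n U /\ forall x, Rabs (h x) < 1 -> U x))
    as [Fu HFu]; [intros n h Hh; apply (proj2 (HS n)), HFh, Hh|].
  exists Fu. split.
  - intros n U HU. destruct (proj1 (HFu n) U HU) as [h [_ [CU _]]]; exact CU.
  - intro K. destruct (Happrox K 1 Rlt_0_1) as [n Hn]. exists n. intros x Hx.
    destruct (Hn x Hx) as [h [Hh Hlt]]. destruct (proj2 (HFu n) h Hh) as [U [HU [_ HUx]]].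
    exists U. split; auto. apply HUx. rewrite Rminus_0_r in Hlt. exact Hlt.
Qed.

Definition radius (n : nat) : R := / INR (S n).

Lemma radius_pos (n : nat) : 0 < radius n.
Proof. apply Rinv_0_lt_compat, lt_0_INR; lia. Qed.

Lemma radius_antitone (n m : nat) : (n <= m)%nat -> radius m <= radius n.
Proof.
  intros H. apply Rinv_le_contravar; [apply lt_0_INR; lia|apply le_INR; lia].
Qed.

Lemma radius_lt (eps : R) : 0 < eps -> exists j, radius j < eps.
Proof.
  intros Heps. destruct (archimed_cor1 eps Heps) as [N [HN HN0]]. exists N.
  apply Rle_lt_trans with (/ INR N); auto.
  apply Rinv_le_contravar; [apply lt_0_INR; auto|apply le_INR; lia].
Qed.

Definition ball_cover (X : TopSpace) (f : X -> R) (r : R) (S : (X -> R) -> Prop)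
    (U : X -> Prop) : Prop :=
  exists g, S g /\ U = (fun x => Rabs (g x - f x) < r).

Lemma ball_subcover_list (X : TopSpace) (f : X -> R) (r : R) (S : (X -> R) -> Prop) :
  has_finite_subcover X (ball_cover X f r S) ->
  exists l, (forall g, In g l -> S g) /\ forall x, exists g, In g l /\ Rabs (g x - f x) < r.
Proof.
  intros [lu [Hlu Hcov]].
  destruct (list_choice lu (fun U g => S g /\ U = (fun x => Rabs (g x - f x) < r)))
    as [lg [Hg1 Hg2]]; [exact Hlu|].
  exists lg. split.
  - intros g Hg. destruct (Hg1 g Hg) as [U [_ [Sg _]]]; exact Sg.
  - intro x. destruct (Hcov x) as [U [HU Ux]]. destruct (Hg2 U HU) as [g [Hg [_ ->]]].
    eauto.
Qed.

Lemma ball_cover_Gamma_F (X : TopSpace) (f : X -> R) (r : R) (S : (X -> R) -> Prop) :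
  continuous_map X f -> Gamma_f X f S -> 0 < r ->
  ~ has_finite_subcover X (ball_cover X f r S) -> Gamma_F X (ball_cover X f r S).
Proof.
  intros Hf HS Hr Hnsub.
  assert (Hdist : forall g, S g -> continuous_map X (fun x => Rabs (g x - f x))).
  { intros g Sg. apply continuous_map_abs, continuous_map_minus; auto. apply (proj1 HS), Sg. }
  assert (Hgam : gamma_cover X (ball_cover X f r S)).
  { apply gamma_cover_intro; auto.
    - intro x. destruct (infinite_set_diff _ _ (proj1 (proj2 HS))
                           (Gamma_f_pointwise X f S x r HS Hr)) as [g [Sg Hg]].
      exists (fun y => Rabs (g y - f y) < r). split; [exists g; auto|].
      apply NNPP; intro N; apply Hg; auto.
    - intro x. destruct (Gamma_f_pointwise X f S x r HS Hr) as [l Hl].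
      apply (finite_set_image _ (fun g y => Rabs (g y - f y) < r) l).
      intros U [[g [Sg ->]] Hx]. exists g. split; auto. }
  destruct (choice (fun U g => ball_cover X f r S U ->
                      S g /\ U = (fun x => Rabs (g x - f x) < r))) as [center Hcenter].
  { intro U. destruct (classic (ball_cover X f r S U)) as [[g Hg]|N];
      [exists g; auto|exists f; tauto]. }
  set (F := fun U x => Rabs (center U x - f x) <= r / 2).
  assert (HFU : forall U x, ball_cover X f r S U -> F U x -> U x).
  { intros U x HU Fx. destruct (Hcenter U HU) as [_ E]. rewrite E. unfold F in Fx. lra. }
  assert (Hmiss : forall x, finite_set (fun U => ball_cover X f r S U /\ ~ F U x)).
  { intro x. assert (Hr2 : 0 < r / 2) by lra.
    destruct (Gamma_f_pointwise X f S x (r / 2) HS Hr2) as [l Hl].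
    apply (finite_set_image _ (fun g y => Rabs (g y - f y) < r) l).
    intros U [HU HFx]. destruct (Hcenter U HU) as [Sc E]. exists (center U). split; auto.
    apply Hl. split; auto. intro Hlt. apply HFx. unfold F. lra. }
  split; [exact Hgam|split].
  - intros U [g [Sg ->]]. apply (cozero_set_lt X (fun x => Rabs (g x - f x))), Hdist, Sg.
  - exists F. split.
    + intros U HU. split; [|intros x; apply HFU, HU].
      apply (zero_set_le X (fun x => Rabs (center U x - f x))), Hdist, (proj1 (Hcenter U HU)).
    + apply gamma_cover_shrink; auto.
Qed.

Definition approximating_selection (X : TopSpace) (f : X -> R)
    (S : nat -> (X -> R) -> Prop) (F : nat -> list (X -> R)) : Prop :=
  (forall n g, In g (F n) -> S n g) /\
  forall (K : list X) (eps : R), 0 < eps ->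
    exists n, forall x, In x K -> exists g, In g (F n) /\ Rabs (g x - f x) < eps.

Lemma approximating_selection_shift (X : TopSpace) (f : X -> R)
    (S : nat -> (X -> R) -> Prop) (m : nat) :
  (exists F, approximating_selection X f (fun n => S (n + m)%nat) F) ->
  exists F, approximating_selection X f S F.
Proof.
  intros [F [HFS Happ]].
  exists (fun n => if (m <=? n)%nat then F (n - m)%nat else nil). split.
  - intros n g. destruct (Nat.leb_spec m n) as [Hle|_]; [|intros []].
    intro Hg. replace n with (n - m + m)%nat by lia. apply HFS, Hg.
  - intros K eps Heps. destruct (Happ K eps Heps) as [n Hn]. exists (n + m)%nat.
    destruct (Nat.leb_spec m (n + m)); [|lia].
    replace (n + m - m)%nat with n by lia. exact Hn.
Qed.

Lemma approximating_selection_of_radius (X : TopSpace) (f : X -> R)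
    (S : nat -> (X -> R) -> Prop) (F : nat -> list (X -> R)) :
  (forall n g, In g (F n) -> S n g) ->
  (forall (K : list X) (j : nat), exists n, (j <= n)%nat /\
     forall x, In x K -> exists g, In g (F n) /\ Rabs (g x - f x) < radius n) ->
  approximating_selection X f S F.
Proof.
  intros HFS Hlate. split; auto. intros K eps Heps.
  destruct (radius_lt eps Heps) as [j Hj]. destruct (Hlate K j) as [n [Hjn Hn]].
  exists n. intros x Hx. destruct (Hn x Hx) as [g [Hg Hlt]]. exists g. split; auto.
  generalize (radius_antitone j n Hjn). lra.
Qed.

Lemma Cp_Ufin_of_Ufin_GammaF_Omega (X : TopSpace) :
  X_Ufin_GammaF_Omega X ->
  forall f : X -> R, continuous_map X f -> Cp_Ufin_Gamma_Omega X f.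
Proof.
  intros HUfin f Hf S HS.
  destruct (classic (forall m, exists n, (m <= n)%nat /\
      has_finite_subcover X (ball_cover X f (radius n) (S n)))) as [Hdeg|Hnondeg].
  - destruct (choice (fun n l => (forall g, In g l -> S n g) /\
        (has_finite_subcover X (ball_cover X f (radius n) (S n)) ->
         forall x, exists g, In g l /\ Rabs (g x - f x) < radius n))) as [F HF].
    { intro n. destruct (classic (has_finite_subcover X (ball_cover X f (radius n) (S n))))
        as [Hsub|N].
      - destruct (ball_subcover_list X f _ _ Hsub) as [l Hl]. exists l. tauto.
      - exists nil. split; [intros g []|tauto]. }
    exists F. apply approximating_selection_of_radius; [apply HF|].
    intros K j. destruct (Hdeg j) as [n [Hjn Hsub]]. exists n. split; auto.
    intros x _. apply (proj2 (HF n) Hsub).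
  - destruct (not_all_ex_not _ _ Hnondeg) as [m Hm].
    apply (approximating_selection_shift X f S m).
    set (C := fun n => ball_cover X f (radius (n + m)) (S (n + m)%nat)).
    assert (HC : forall n, ~ has_finite_subcover X (C n)).
    { intros n Hsub. apply Hm. exists (n + m)%nat. split; [lia|exact Hsub]. }
    destruct (HUfin C (fun n => ball_cover_Gamma_F X f _ _ Hf (HS _) (radius_pos _) (HC n)) HC)
      as [Fu [HFu Hom]].
    destruct (seq_list_choice Fu (fun n U g =>
        S (n + m)%nat g /\ U = (fun x => Rabs (g x - f x) < radius (n + m))))
      as [G HG]; [intros n U HU; apply HFu, HU|].
    exists G. apply approximating_selection_of_radius.
    + intros n g Hg. destruct (proj1 (HG n) g Hg) as [U [_ [Sg _]]]. exact Sg.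
    + intros K j.
      destruct (late_cover X Fu (fun n => not_covering_of_no_finite_subcover X (C n) (Fu n)
                  (HC n) (HFu n)) Hom K j) as [n [Hjn Hn]].
      exists n. split; auto. intros x Hx.
      destruct (Hn x Hx) as [U [HU Ux]]. destruct (proj2 (HG n) U HU) as [g [Hg [_ EU]]].
      exists g. split; auto. rewrite EU in Ux.
      generalize (radius_antitone n (n + m) ltac:(lia)). lra.
Qed.

Theorem mainTheorem13 (X : TopSpace) (HX : Tychonoff X) :
  (forall f : X -> R, continuous_map X f -> Cp_Ufin_Gamma_Omega X f) <->
  X_Ufin_GammaF_Omega X.
Proof.
  split; [apply Ufin_GammaF_Omega_of_Cp|apply Cp_Ufin_of_Ufin_GammaF_Omega].
Qed.
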